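(* Let $A=k[x_1][x_2;\alpha_2,\delta_2]_p\cdots[x_n;\alpha_n,\delta_n]_p$ be an iterated Poisson polynomial algebra over a field $k$ of characteristic zero, supporting a rational Poisson action of a torus $H=(k^\times)^r$ such that $x_1,\dots,x_n$ are $H$-eigenvectors. Assume there exist $\eta_1,\dots,\eta_n\in\mathfrak h=\operatorname{Lie}H$ such that $\eta_i.x_j=\alpha_i(x_j)$ for $i>j$ and the $\eta_i$-eigenvalue $s_i$ of $x_i$ is nonzero for each $i$. Then $\alpha_i\delta_i=\delta_i(\alpha_i+s_i)$ for all $i$.
   Context: If $B$ is a Poisson algebra, $\alpha$ a Poisson derivation of $B$ and $\delta$ a derivation of $B$ with $\delta(\{a,b\})=\{\delta(a),b\}+\{a,\delta(b)\}+\alpha(a)\delta(b)-\delta(a)\alpha(b)$, then $B[x;\alpha,\delta]_p$ is $B[x]$ with the unique Poisson bracket extending that of $B$ with $\{x,b\}=\alpha(b)x+\delta(b)$; an iterated Poisson polynomial algebra iterates this starting from $k[x_1]$. A rational Poisson action of $H$ is an action by Poisson automorphisms with $A$ the direct sum of $H$-eigenspaces $A_x$, $x\in X(H)\cong\mathbb Z^r$ ($(m_i)\leftrightarrow h\mapsto\prod h_i^{m_i}$). $\mathfrak h=k^r$ acts by $\eta.a=(\eta|x)a$ for $a\in A_x$ (dot product), $(\eta|x)$ being the $\eta$-eigenvalue of $a$. *)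

From HB Require Import structures.
From mathcomp Require Import all_boot all_order all_algebra.
From mathcomp Require Import mpoly.
Set Implicit Arguments. Unset Strict Implicit. Unset Printing Implicit Defensive.
Import Order.TTheory GRing.Theory Num.Theory.
Local Open Scope ring_scope.

Section PoissonDefs.
Variables (k : fieldType) (n : nat).
Local Notation P := {mpoly k[n]}.

(* A_i := k[x_1,...,x_i]: polynomials involving only the first i variables
   (0-indexed variables 'X_0 .. 'X_(i-1)). *)
Definition inA (i : nat) (p : P) : bool :=
  all (fun m : 'X_{1..n} => [forall j : 'I_n, (i <= j)%N ==> (m j == 0%N)]) (msupp p).

Definition poisson_bracket (br : P -> P -> P) : Prop :=
  [/\ (forall (c : k) a b d, br (c *: a + b) d = c *: br a d + br b d),
      (forall (c : k) a b d, br d (c *: a + b) = c *: br d a + br d b),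
      (forall a b, br a b = - br b a),
      (forall a b c, br a (br b c) + br b (br c a) + br c (br a b) = 0)
    & (forall a b c, br a (b * c) = br a b * c + b * br a c)].

Definition derivation_on (i : nat) (d : P -> P) : Prop :=
  [/\ (forall a, inA i a -> inA i (d a)),
      (forall (c : k) a b, inA i a -> inA i b -> d (c *: a + b) = c *: d a + d b)
    & (forall a b, inA i a -> inA i b -> d (a * b) = d a * b + a * d b)].

Definition poisson_derivation_on (br : P -> P -> P) (i : nat) (d : P -> P) : Prop :=
  derivation_on i d /\
  (forall a b, inA i a -> inA i b -> d (br a b) = br (d a) b + br a (d b)).

Definition twisted_condition (br : P -> P -> P) (i : nat) (al de : P -> P) : Prop :=
  forall a b, inA i a -> inA i b ->
    de (br a b) = br (de a) b + br a (de b) + al a * de b - de a * al b.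

(* br makes k[x_1,...,x_n] the iterated Poisson polynomial algebra
   k[x_1][x_2;al_2,de_2]_p ... [x_n;al_n,de_n]_p  (0-indexed: variable 'X_i
   is adjoined to A_i with data al i, de i; for i = 0 the base k[x_1] is
   k[x_1; 0, 0]_p). *)
Definition iterated_ppa (br : P -> P -> P) (al de : 'I_n -> P -> P) : Prop :=
  poisson_bracket br /\
  forall i : 'I_n,
    [/\ (forall a b, inA i a -> inA i b -> inA i (br a b)),
        poisson_derivation_on br i (al i),
        derivation_on i (de i),
        twisted_condition br i (al i) (de i)
      & (forall b, inA i b -> br 'X_i b = al i b * 'X_i + de i b)].

(* The torus H = (k^x)^r, elements represented by h : 'I_r -> k, all nonzero. *)
Definition torus_elt (r : nat) (h : 'I_r -> k) : Prop := forall l, h l != 0.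

Definition character (r : nat) (m : 'I_r -> int) (h : 'I_r -> k) : k :=
  \prod_(l < r) h l ^ m l.

Definition eigen_of (r : nat) (act : ('I_r -> k) -> P -> P) (m : 'I_r -> int) (a : P) :=
  forall h, torus_elt h -> act h a = character m h *: a.

Definition rational_poisson_action (r : nat) (br : P -> P -> P)
    (act : ('I_r -> k) -> P -> P) : Prop :=
  [/\ (forall h, torus_elt h ->
        [/\ forall (c : k) a b, act h (c *: a + b) = c *: act h a + act h b,
            forall a b, act h (a * b) = act h a * act h b,
            act h 1 = 1,
            forall a b, act h (br a b) = br (act h a) (act h b)
          & bijective (act h)]),
      (forall a, act (fun _ => 1) a = a),
      (forall h g, torus_elt h -> torus_elt g ->
         forall a, act (fun l => h l * g l) a = act h (act g a))
    & (forall a, exists (N : nat) (ws : 'I_N -> 'I_r -> int) (as_ : 'I_N -> P),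
         a = \sum_(j < N) as_ j /\ forall j, eigen_of act (ws j) (as_ j))].

(* (eta | m): the eta-eigenvalue of elements of A_m, eta in h = k^r *)
Definition lie_pair (r : nat) (eta : 'I_r -> k) (m : 'I_r -> int) : k :=
  \sum_(l < r) eta l * (m l)%:~R.

End PoissonDefs.

(* A monomial x^m is an H-eigenvector whose weight is the sum of the weights
   of its variables, and in characteristic zero distinct weights give distinct
   characters of H, so every monomial in the support of an eigenvector carries
   the eigenvector's weight.  On k[x_1,...,x_(i-1)] the derivation alpha_i
   agrees with eta_i on the variables, hence on monomials, hence on every
   eigenvector v: alpha_i v = (eta_i | weight v) v.  Since
   delta_i b = {x_i, b} - alpha_i(b) x_i, delta_i raises the weight of an
   eigenvector b by the weight of x_i, which gives
   alpha_i delta_i b = delta_i alpha_i b + s_i delta_i b on eigenvectors,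
   and linearity extends this to all b. *)

From HB Require Import structures.
From mathcomp Require Import all_boot all_order all_algebra.
From mathcomp Require Import mpoly ring.
Import GRing.Theory.
Local Open Scope ring_scope.
Set Implicit Arguments. Unset Strict Implicit.

Section Monomials.
Variable n : nat.
Implicit Types (m : 'X_{1..n}) (i : nat).

Definition mnm_below i m : bool := [forall j : 'I_n, (i <= j)%N ==> (m j == 0%N)].

Lemma mnm_ind (P : 'X_{1..n} -> Prop) :
  P 0%MM -> (forall m j, P m -> P (m + U_(j))%MM) -> forall m, P m.
Proof.
move=> P0 PS m; have [d] := ubnP (mdeg m); elim: d m => // d IH m.
have [-> //|nz_m] := eqVneq m 0%MM.
have [j mj] : exists j, m j != 0%N.
  apply/existsP; apply: contraNT nz_m; rewrite negb_exists => /forallP m0.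
  by apply/eqP/mnmP => j; rewrite mnm0E; apply/eqP/negPn/m0.
have le_Um : (U_(j) <= m)%MM by rewrite lep1mP.
rewrite -(submK le_Um) mdegD mdeg1 addn1 ltnS => lt_md.
exact/PS/IH.
Qed.

Lemma mnm_below_ind i (P : 'X_{1..n} -> Prop) :
  P 0%MM ->
  (forall m (j : 'I_n), mnm_below i m -> (j < i)%N -> P m -> P (m + U_(j))%MM) ->
  forall m, mnm_below i m -> P m.
Proof.
move=> P0 PS; elim/mnm_ind => // m j IH /forallP below_mj.
have below_m : mnm_below i m.
  apply/forallP => j'; apply/implyP => /(implyP (below_mj j')).
  by rewrite mnmDE addn_eq0 => /andP[].
apply: PS (IH below_m) => //; rewrite ltnNge; apply/negP => /(implyP (below_mj j)).
by rewrite mnmDE mnm1E eqxx addn1.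
Qed.

Lemma mnm_below0 i : mnm_below i 0%MM.
Proof. by apply/forallP => j; rewrite mnm0E eqxx implybT. Qed.

Lemma mnm_belowU i (j : 'I_n) : (j < i)%N -> mnm_below i U_(j)%MM.
Proof.
move=> lt_ji; apply/forallP => j'; apply/implyP => le_ij'; rewrite mnm1E.
by case: (eqVneq j j') le_ij' => [<-|//]; rewrite leqNgt lt_ji.
Qed.

End Monomials.

Section PolynomialSubalgebras.
Variables (k : fieldType) (n : nat).
Local Notation P := {mpoly k[n]}.
Implicit Types (i : nat) (p a b : P) (m : 'X_{1..n}).

Lemma inAX i m : inA i ('X_[m] : P) = mnm_below i m.
Proof. by rewrite /inA msuppX /= andbT. Qed.

Lemma inA_msupp i p m : inA i p -> m \in msupp p -> mnm_below i m.
Proof. by move=> /allP; apply. Qed.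

Lemma inA0 i : inA i (0 : P).
Proof. by rewrite /inA msupp0. Qed.

Lemma inA_lin i (c : k) a b : inA i a -> inA i b -> inA i (c *: a + b).
Proof.
move=> /allP Aa /allP Ab; apply/allP => m; apply: contraTT => not_below.
rewrite mcoeff_msupp negbK mcoeffD mcoeffZ.
by rewrite !memN_msupp_eq0 ?mulr0 ?addr0 //; apply: contra not_below; [apply: Ab|apply: Aa].
Qed.

Definition linear_on (S : pred P) (F : P -> P) :=
  forall (c : k) a b, S a -> S b -> F (c *: a + b) = c *: F a + F b.

Section LinearOn.
Variables (S : pred P) (F : P -> P).
Hypotheses (S0 : S 0) (F_lin : linear_on S F).

Lemma linear_on0 : F 0 = 0.
Proof.
have := F_lin 1 S0 S0; rewrite !scale1r addr0 => /esym/eqP.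
by rewrite -subr_eq0 addrK => /eqP.
Qed.

Lemma linear_onZ (c : k) a : S a -> F (c *: a) = c *: F a.
Proof. by move=> Sa; have := F_lin c Sa S0; rewrite !addr0 linear_on0 addr0. Qed.

Lemma linear_on_mpolyE p :
  (forall (c : k) a b, S a -> S b -> S (c *: a + b)) ->
  (forall m, m \in msupp p -> S 'X_[m]) ->
  F p = \sum_(m <- msupp p) p@_m *: F 'X_[m].
Proof.
move=> S_lin SX; rewrite {1}(mpolyE p) [in RHS]big_seq [in LHS]big_seq.
suff [] : S (\sum_(m <- msupp p | m \in msupp p) p@_m *: 'X_[m]) /\
  F (\sum_(m <- msupp p | m \in msupp p) p@_m *: 'X_[m]) =
  \sum_(m <- msupp p | m \in msupp p) p@_m *: F 'X_[m] by [].
apply: (big_ind2 (fun x y => S x /\ F x = y)) => [|x1 y1 x2 y2 [Sx1 <-] [Sx2 <-]|m supp_m].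
- by rewrite linear_on0.
- by have := F_lin 1 Sx1 Sx2; have := S_lin 1 _ _ Sx1 Sx2; rewrite !scale1r => -> ->.
- have SXm := SX m supp_m.
  by rewrite linear_onZ //; split=> //; rewrite -[_ *: _]addr0 S_lin.
Qed.

End LinearOn.

Lemma linear_on_inA_mpolyE i (F : P -> P) p : linear_on (inA i) F -> inA i p ->
  F p = \sum_(m <- msupp p) p@_m *: F 'X_[m].
Proof.
move=> F_lin Ap; apply: (linear_on_mpolyE (inA0 i) F_lin) => [|m supp_m].
  exact: inA_lin.
by rewrite inAX (inA_msupp Ap).
Qed.

Lemma mcoeff_msupp_sum p (f : 'X_{1..n} -> k) m :
  (\sum_(m' <- msupp p) (p@_m' * f m') *: 'X_[m'])@_m = p@_m * f m.
Proof.
rewrite raddf_sum /=; under eq_bigr => m' _ do rewrite mcoeffZ mcoeffX.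
have [supp_m|not_supp_m] := boolP (m \in msupp p).
  rewrite (bigD1_seq m) ?msupp_uniq //= eqxx mulr1 big1 ?addr0 // => m'.
  by move/negbTE->; rewrite mulr0.
rewrite (memN_msupp_eq0 not_supp_m) mul0r big1_seq // => m' /andP[_ supp_m'].
have ne_m'm : m' != m by apply: contraTneq supp_m' => ->.
by rewrite (negbTE ne_m'm) mulr0.
Qed.

Lemma derivation_mpolyX i (d : P -> P) (c : 'I_n -> k) :
  derivation_on i d -> (forall j : 'I_n, (j < i)%N -> d 'X_j = c j *: 'X_j) ->
  forall m, mnm_below i m -> d 'X_[m] = (\sum_(j < n) (m j)%:R * c j) *: 'X_[m].
Proof.
move=> [_ _ d_mul] dX; apply: mnm_below_ind => [|m j below_m lt_ji IH].
  have A1 : inA i (1 : P) by rewrite -mpolyX0 inAX mnm_below0.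
  rewrite mpolyX0 big1 ?scale0r => [|j _]; last by rewrite mnm0E mul0r.
  have := d_mul 1 1 A1 A1; rewrite !mulr1 mul1r => /esym/eqP.
  by rewrite -subr_eq0 addrK => /eqP.
have sum_mU : \sum_(j' < n) ((m + U_(j))%MM j')%:R * c j' =
              \sum_(j' < n) (m j')%:R * c j' + c j.
  rewrite [c j in RHS](_ : _ = \sum_(j' < n) (U_(j)%MM j')%:R * c j').
    by rewrite -big_split; apply: eq_bigr => j' _; rewrite mnmDE natrD mulrDl.
  rewrite (bigD1 j) //= mnm1E eqxx mul1r big1 ?addr0 // => j' /negbTE.
  by rewrite mnm1E eq_sym => ->; rewrite mul0r.
rewrite mpolyXD d_mul ?inAX ?mnm_belowU // IH dX // sum_mU.
by rewrite scalerDl -scalerAl -scalerAr.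
Qed.

Lemma monoid_morphism_mpolyX (f : P -> P) (c : 'I_n -> k) :
  monoid_morphism f -> (forall j : 'I_n, f 'X_j = c j *: 'X_j) ->
  forall m, f 'X_[m] = (\prod_(j < n) c j ^+ m j) *: 'X_[m].
Proof.
move=> [f1 f_mul] fX; elim/mnm_ind => [|m j IH].
  by rewrite mpolyX0 f1 big1 ?scale1r // => j _; rewrite mnm0E expr0.
have prod_mU : \prod_(j' < n) c j' ^+ (m + U_(j))%MM j' =
               \prod_(j' < n) c j' ^+ m j' * c j.
  rewrite [c j in RHS](_ : _ = \prod_(j' < n) c j' ^+ U_(j)%MM j').
    by rewrite -big_split; apply: eq_bigr => j' _; rewrite mnmDE exprD.
  rewrite (bigD1 j) //= mnm1E eqxx expr1 big1 ?mulr1 // => j' /negbTE.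
  by rewrite mnm1E eq_sym => ->.
by rewrite mpolyXD f_mul IH fX prod_mU -scalerAl -scalerAr scalerA.
Qed.

End PolynomialSubalgebras.

Section Weights.
Variables (k : fieldType) (r : nat).
Implicit Types (a b : 'I_r -> int) (eta h : 'I_r -> k).

Lemma eq_lie_pair eta a b : a =1 b -> lie_pair eta a = lie_pair eta b.
Proof. by move=> eq_ab; apply: eq_bigr => l _; rewrite eq_ab. Qed.

Lemma lie_pairD eta a b :
  lie_pair eta (fun l => a l + b l) = lie_pair eta a + lie_pair eta b.
Proof. by rewrite /lie_pair -big_split; apply: eq_bigr => l _; rewrite intrD mulrDr. Qed.

Lemma characterD h a b : torus_elt h ->
  character (fun l => a l + b l) h = character a h * character b h.
Proof.
by move=> h_torus; rewrite /character -big_split; apply: eq_bigr => l _; rewrite expfzDr.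
Qed.

Lemma pchar0_exp2z_eq1 (z : int) : [pchar k] =i pred0 -> (2 : k) ^ z = 1 -> z = 0.
Proof.
move=> /pcharf0P pchar0.
have exp2_eq1 m : (2 : k) ^+ m = 1 -> m = 0%N.
  move=> exp2m; have : (2 ^ m - 1)%:R == 0 :> k.
    by rewrite natrB ?expn_gt0 // natrX exp2m subrr.
  rewrite pchar0 subn_eq0 -[X in (_ <= X)%N](expn0 2) leq_exp2l // leqn0.
  by move/eqP.
case: z => m; first by move/exp2_eq1->.
by rewrite NegzE -invr_expz => /eqP; rewrite invr_eq1 => /eqP /exp2_eq1.
Qed.

Lemma character_inj a b : [pchar k] =i pred0 ->
  (forall h, torus_elt h -> character a h = character b h) -> a =1 b.
Proof.
move=> pchar0 eq_ab l.
have two_neq0 : (2 : k) != 0 by move/pcharf0P: pchar0 => ->.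
(* the torus element with 2 in coordinate l and 1 elsewhere separates exponents *)
pose h (l' : 'I_r) : k := if l' == l then 2 else 1.
have h_torus : torus_elt h by move=> l'; rewrite /h; case: ifP; rewrite ?oner_neq0.
have character_h c : character c h = 2 ^ c l.
  rewrite /character (bigD1 l) //= big1 ?mulr1 /h ?eqxx // => l' /negbTE ->.
  exact: exp1rz.
have : (2 : k) ^ (a l - b l) = 1.
  apply: (mulIf (expfz_neq0 (b l) two_neq0)).
  by rewrite -expfzDr // subrK mul1r -!character_h eq_ab.
by move/(pchar0_exp2z_eq1 pchar0)/eqP; rewrite subr_eq0 => /eqP.
Qed.

Definition mnm_weight n (w : 'I_n -> 'I_r -> int) (m : 'X_{1..n}) : 'I_r -> int :=
  fun l => \sum_(j < n) (m j)%:Z * w j l.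

Lemma lie_pair_mnm_weight n eta (w : 'I_n -> 'I_r -> int) m :
  lie_pair eta (mnm_weight w m) = \sum_(j < n) (m j)%:R * lie_pair eta (w j).
Proof.
rewrite /lie_pair /mnm_weight; under eq_bigr => l _ do rewrite rmorph_sum mulr_sumr.
rewrite exchange_big; apply: eq_bigr => j _; rewrite mulr_sumr; apply: eq_bigr => l _.
by rewrite rmorphM /= mulrCA.
Qed.

Lemma character_mnm_weight n (w : 'I_n -> 'I_r -> int) m h : torus_elt h ->
  character (mnm_weight w m) h = \prod_(j < n) character (w j) h ^+ m j.
Proof.
move=> h_torus; rewrite /character /mnm_weight.
have exp_sum l : {morph exprz (h l) : y z / y + z >-> y * z}.
  by move=> y z; apply: expfzDr.
under eq_bigr => l _ do rewrite (big_morph _ (exp_sum l) (expr0z _)).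
rewrite exchange_big; apply: eq_bigr => j _; rewrite -prodrXl; apply: eq_bigr => l _.
by rewrite mulrC -exprz_exp.
Qed.

End Weights.

Section TorusEigenvectors.
Variables (k : fieldType) (n r : nat).
Local Notation P := {mpoly k[n]}.
Variables (br : P -> P -> P) (al de : 'I_n -> P -> P) (act : ('I_r -> k) -> P -> P).
Variables (w : 'I_n -> 'I_r -> int) (eta : 'I_n -> 'I_r -> k).
Hypothesis pchar0 : [pchar k] =i pred0.
Hypothesis ppa : iterated_ppa br al de.
Hypothesis rat : rational_poisson_action br act.
Hypothesis eigenX : forall i : 'I_n, eigen_of act (w i) 'X_i.
Hypothesis alX : forall i j : 'I_n, (j < i)%N -> al i 'X_j = lie_pair (eta i) (w j) *: 'X_j.

Lemma eigen_mpolyX m : eigen_of act (mnm_weight w m) 'X_[m].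
Proof.
move=> h h_torus; have [/(_ h h_torus) [_ act_mul act1 _ _] _ _ _] := rat.
by rewrite character_mnm_weight //; apply: monoid_morphism_mpolyX => // j; apply: eigenX.
Qed.

Lemma al_mpolyX (i : 'I_n) m :
  mnm_below i m -> al i 'X_[m] = lie_pair (eta i) (mnm_weight w m) *: 'X_[m].
Proof.
have [_ /(_ i) [_ [al_der _] _ _ _]] := ppa.
by rewrite lie_pair_mnm_weight; apply: derivation_mpolyX => // j; apply: alX.
Qed.

Lemma eigen_msupp_weight p m' m :
  eigen_of act m' p -> m \in msupp p -> mnm_weight w m =1 m'.
Proof.
move=> eig_p supp_m; apply: character_inj pchar0 _ => h h_torus.
have [/(_ h h_torus) [act_lin _ _ _ _] _ _ _] := rat.
have act_p : act h p =
    \sum_(m'' <- msupp p) (p@_m'' * character (mnm_weight w m'') h) *: 'X_[m''].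
  have act_lin' : linear_on predT (act h) by move=> c a b _ _; apply: act_lin.
  rewrite (linear_on_mpolyE isT act_lin') //.
  by apply: eq_bigr => m'' _; rewrite eigen_mpolyX // scalerA.
have := congr1 (mcoeff m) act_p; rewrite mcoeff_msupp_sum eig_p // mcoeffZ mulrC.
by move/mulfI => -> //; rewrite -mcoeff_msupp.
Qed.

Lemma al_eigen (i : 'I_n) p m' :
  inA i p -> eigen_of act m' p -> al i p = lie_pair (eta i) m' *: p.
Proof.
move=> Ap eig_p; have [_ /(_ i) [_ [[_ al_lin _] _] _ _ _]] := ppa.
rewrite (linear_on_inA_mpolyE al_lin Ap) {3}(mpolyE p) scaler_sumr.
apply: eq_big_seq => m supp_m.
rewrite al_mpolyX ?(inA_msupp Ap) // (eq_lie_pair _ (eigen_msupp_weight eig_p supp_m)).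
by rewrite !scalerA mulrC.
Qed.

Lemma de_eigen (i : 'I_n) b m' : inA i b -> eigen_of act m' b ->
  eigen_of act (fun l => w i l + m' l) (de i b).
Proof.
move=> Ab eig_b h h_torus.
have [[br_linl br_linr _ _ _] /(_ i) [_ _ _ _ brX]] := ppa.
have [/(_ h h_torus) [act_lin act_mul _ act_br _] _ _ _] := rat.
have brZl c a d : br (c *: a) d = c *: br a d.
  exact: (@linear_onZ _ _ predT (br^~ d) isT (fun c' a' b' _ _ => br_linl c' a' b' d) c a).
have brZr c a d : br d (c *: a) = c *: br d a.
  exact: (@linear_onZ _ _ predT (br d) isT (fun c' a' b' _ _ => br_linr c' a' b' d) c a).
have de_b : de i b = br 'X_i b - lie_pair (eta i) m' *: (b * 'X_i).
  by rewrite brX // (al_eigen Ab eig_b) -scalerAl addrC addKr.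
rewrite de_b characterD // addrC -scaleNr act_lin act_br act_mul eig_b // eigenX //.
rewrite brZl brZr -scalerAl -scalerAr !scalerA scalerDr !scalerA.
by congr (_ *: _ + _ *: _); ring.
Qed.

Lemma al_de_eigen (i : 'I_n) b m' : inA i b -> eigen_of act m' b ->
  al i (de i b) = de i (al i b) + lie_pair (eta i) (w i) *: de i b.
Proof.
move=> Ab eig_b; have [_ /(_ i) [_ _ [de_A de_lin _] _ _]] := ppa.
rewrite (al_eigen (de_A _ Ab) (de_eigen Ab eig_b)) lie_pairD (al_eigen Ab eig_b).
by rewrite (linear_onZ (inA0 _ _ i) de_lin _ Ab) scalerDl addrC.
Qed.

End TorusEigenvectors.

Theorem lemma4p2 (k : fieldType) (n r : nat)
    (br : {mpoly k[n]} -> {mpoly k[n]} -> {mpoly k[n]})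
    (al de : 'I_n -> {mpoly k[n]} -> {mpoly k[n]})
    (act : ('I_r -> k) -> {mpoly k[n]} -> {mpoly k[n]})
    (w : 'I_n -> 'I_r -> int) (eta : 'I_n -> 'I_r -> k) :
  [pchar k] =i pred0 ->
  iterated_ppa br al de ->
  rational_poisson_action br act ->
  (forall i : 'I_n, eigen_of act (w i) 'X_i) ->
  (forall i j : 'I_n, (j < i)%N -> al i 'X_j = lie_pair (eta i) (w j) *: 'X_j) ->
  (forall i : 'I_n, lie_pair (eta i) (w i) != 0) ->
  forall (i : 'I_n) (b : {mpoly k[n]}), inA i b ->
    al i (de i b) = de i (al i b) + lie_pair (eta i) (w i) *: de i b.
Proof.
move=> pchar0 ppa rat eigenX alX _ i b Ab.
set s := lie_pair (eta i) (w i).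
have [_ /(_ i) [_ [[al_A al_lin _] _] [de_A de_lin _] _ _]] := ppa.
pose F x := al i (de i x) - de i (al i x) - s *: de i x.
have F_lin : linear_on (inA i) F.
  move=> c x y Ax Ay; rewrite /F de_lin // al_lin ?de_A // al_lin // de_lin ?al_A //.
  by rewrite -!mul_mpolyC; ring.
have F_X m : m \in msupp b -> F 'X_[m] = 0.
  move=> supp_m; have AX : inA i ('X_[m] : {mpoly k[n]}) by rewrite inAX (inA_msupp Ab).
  have eig_X := eigen_mpolyX rat eigenX m.
  by rewrite /F (al_de_eigen pchar0 ppa rat eigenX alX AX eig_X) -!mul_mpolyC; ring.
suff : F b = 0 by rewrite /F => /eqP; rewrite subr_eq0 subr_eq addrC => /eqP.
rewrite (linear_on_inA_mpolyE F_lin Ab) big1_seq // => m /andP[_ /F_X ->].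
exact: scaler0.
Qed.
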